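(* Let $W_d$ be a subgroup of the Higman–Thompson group $V_d$ containing the commutator subgroup $[F_d,F_d]$. Then every non-trivial element of $W_d$ has infinitely many $[F_d,F_d]$-conjugates (so in particular $W_d$ is ICC); equivalently, the inclusion $L([F_d,F_d])\subseteq L(W_d)$ is irreducible. In particular, if $W_d$ contains $F_d$, then the inclusion $L(F_d)\subseteq L(W_d)$ is also irreducible.
   Context: Fix $d\ge 2$. A $d$-ary tree is a finite rooted tree in which each non-leaf vertex has exactly $d$ ordered children; leaves are numbered $1,\dots,n$ left to right; $T_k$ is $T$ with a $d$-ary caret attached to its $k$-th leaf. For $\sigma\in S_n$, $1\le k\le n$, partition $\{1,\dots,n+d-1\}$ into consecutive blocks $B^{(k)}_j=\{j\}$ ($j<k$), $B^{(k)}_k=\{k,\dots,k+d-1\}$, $B^{(k)}_j=\{j+d-1\}$ ($j>k$), and let $(\sigma)\varsigma_k^n\in S_{n+d-1}$ map $B^{(k)}_j$ onto $B^{(\sigma(k))}_{\sigma(j)}$ order-preservingly. The Higman–Thompson group $V_d$ is the group of classes $[T,\sigma,U]$ of triples with $T,U$ $d$-ary trees with $n$ leaves and $\sigma\in S_n$, under the equivalence generated by $(T,\sigma,U)\sim(T_{\sigma(k)},(\sigma)\varsigma_k^n,U_k)$, with product $[T,\sigma,U][U,\tau,W]=[T,\sigma\tau,W]$. $F_d$ is the subgroup of elements $[T,\mathrm{id},U]$, and $[F_d,F_d]$ its commutator subgroup. An inclusion of von Neumann algebras $N\subseteq M$ is irreducible if $N'\cap M\subseteq N$ (for a factor $N$: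 $N'\cap M=\mathbb{C}1$). $L(G)$ denotes the group von Neumann algebra. *)

From Stdlib Require Import Relations.
From mathcomp Require Import all_boot all_fingroup.
Set Implicit Arguments. Unset Strict Implicit. Unset Printing Implicit Defensive.

Inductive tree : Type := Leaf | Node of seq tree.

Fixpoint nleaves (t : tree) : nat :=
  match t with
  | Leaf => 1
  | Node l => (fix go (l : seq tree) : nat :=
                 match l with [::] => 0 | c :: r => nleaves c + go r end) l
  end.

Fixpoint wf (d : nat) (t : tree) : bool :=
  match t with
  | Leaf => true
  | Node l => (size l == d) &&
      (fix go (l : seq tree) : bool :=
         match l with [::] => true | c :: r => wf d c && go r end) l
  end.

(* [graft d t k] : attach a d-ary caret to the leaf of index k
   (leaves indexed 0,...,n-1 from left to right, i.e. leaf k+1 of the paper). *)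
Fixpoint graft (d : nat) (t : tree) (k : nat) : tree :=
  match t with
  | Leaf => if k == 0 then Node (nseq d Leaf) else Leaf
  | Node l => Node ((fix go (l : seq tree) (k : nat) : seq tree :=
        match l with
        | [::] => [::]
        | c :: r => if k < nleaves c then graft d c k :: r
                    else c :: go r (k - nleaves c)
        end) l k)
  end.

Record triple := Triple { tn : nat; tT : tree; tU : tree; tsig : 'S_tn }.

Definition valid (d : nat) (x : triple) : bool :=
  [&& wf d (tT x), wf d (tU x), nleaves (tT x) == tn x & nleaves (tU x) == tn x].

Definition pnat (n : nat) (s : 'S_n) (j : nat) : nat :=
  match @insub nat (fun i => i < n) _ j with
  | Some o => val (s o) | None => j end.

(* the permutation (sigma) varsigma_k^n, 0-indexed, as a function on nat *)
Definition blk (d k i : nat) : nat :=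
  if i < k then i else if i < k + d then k else i - (d - 1).
Definition offs (d k i : nat) : nat :=
  if (k <= i) && (i < k + d) then i - k else 0.
Definition bstart (d m l : nat) : nat :=
  if l < m then l else if l == m then m else l + (d - 1).
Definition varsigma (d n : nat) (s : 'S_n) (k i : nat) : nat :=
  bstart d (pnat s k) (pnat s (blk d k i)) + offs d k i.

(* elementary expansion (T,s,U) -> (T_{s(k)}, (s)varsigma_k, U_k) *)
Definition expand (d : nat) (x y : triple) : Prop :=
  valid d x /\
  exists k : 'I_(tn x),
    [/\ tn y = tn x + (d - 1),
        tT y = graft d (tT x) (val (tsig x k)),
        tU y = graft d (tU x) k
      & forall i : 'I_(tn y), val (tsig y i) = varsigma d (tsig x) k i].

Definition tequiv (d : nat) : relation triple := clos_refl_sym_trans _ (expand d).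

Definition tid : triple := @Triple 1 Leaf Leaf 1%g.

Definition tinv (x : triple) : triple := @Triple (tn x) (tU x) (tT x) (tsig x)^-1%g.

(* product relation: [T,s,U][U,t,W] = [T, s o t, W] (the product permutation
   sends k to s(t(k))) *)
Definition tmul (d : nat) (x y z : triple) : Prop :=
  exists a b c : triple,
    (valid d a /\ valid d b /\ valid d c) /\
    (tequiv d x a /\ tequiv d y b /\ tequiv d z c) /\
    (tn a = tn c /\ tn b = tn c) /\
    (tT c = tT a /\ tU a = tT b /\ tU c = tU b) /\
    (forall i, i < tn c -> pnat (tsig c) i = pnat (tsig a) (pnat (tsig b) i)).

Definition inF (d : nat) (x : triple) : Prop :=
  exists y, [/\ valid d y, tequiv d x y & tsig y = 1%g].

Definition tcomm (d : nat) (a b c : triple) : Prop :=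
  exists p q, [/\ tmul d a b p, tmul d (tinv a) (tinv b) q & tmul d p q c].

Inductive inFF (d : nat) : triple -> Prop :=
| FF_comm a b c : inF d a -> inF d b -> valid d a -> valid d b -> valid d c ->
                  tcomm d a b c -> inFF d c
| FF_id : inFF d tid
| FF_inv x : inFF d x -> inFF d (tinv x)
| FF_mul x y z : inFF d x -> inFF d y -> valid d z -> tmul d x y z -> inFF d z
| FF_eq x y : inFF d x -> valid d y -> tequiv d x y -> inFF d y.

Definition is_subgroupV (d : nat) (W : triple -> Prop) : Prop :=
  [/\ (forall x, W x -> valid d x),
      (forall x y, W x -> valid d y -> tequiv d x y -> W y),
      W tid,
      (forall x, W x -> W (tinv x))
    & (forall x y z, W x -> W y -> valid d z -> tmul d x y z -> W z)].

Definition tconj (d : nat) (h g c : triple) : Prop :=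
  exists p, tmul d h g p /\ tmul d p (tinv h) c.

(* g has infinitely many H-conjugates (as elements of V_d, i.e. up to tequiv):
   no finite list of triples covers all of them *)
Definition inf_conj (d : nat) (H : triple -> Prop) (g : triple) : Prop :=
  forall s : seq triple, exists h c,
    [/\ H h, valid d h, valid d c, tconj d h g c
      & forall i, i < size s -> ~ tequiv d c (nth tid s i)].

(* A triple [T, sigma, U] acts on the infinite words over {0, ..., d-1} by
   replacing the prefix given by the i-th leaf of U with the (sigma i)-th leaf
   of T; this action is invariant under expansion, multiplicative and faithful.
   A nontrivial g therefore maps some cylinder [w] into a cylinder [u] disjoint
   from it.  Placing copies of the generator x0 of F_d at [u] and at
   [u ++ [0; d-1]] yields a commutator c, supported in [u], that moves the
   "spike" points [u ++ [0; d-1] ++ 0^k (d-1) 0 0 ...] one step (k to k+1).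
   Then c^n g c^-n sends a chosen point of the cylinder [w] to the n-th spike
   point, so these conjugates are pairwise distinct. *)

From Pilot Require Import Defs.
From Stdlib Require Import Relations FunctionalExtensionality Classical.
From mathcomp Require Import all_boot all_fingroup zify.

Set Implicit Arguments. Unset Strict Implicit. Unset Printing Implicit Defensive.

(* [all_boot] shadows [Defs.pnat] with the pi-number predicate of prime.v. *)
Local Notation pnat := Defs.pnat.
Local Notation dword d a := (all (fun x => x < d) a).

(** * Leaf addresses and infinite words *)

Section TreeInd.
Variables (P : tree -> Prop) (P_Leaf : P Leaf)
  (P_Node : forall l, (forall i, i < size l -> P (nth Leaf l i)) -> P (Node l)).

Lemma tree_nth_ind t : P t.
Proof.
move: t; fix IH 1 => -[|l]; first exact: P_Leaf.
by apply: P_Node; elim: l => [|c r IHr] [|i] Hi; [| |exact: IH|exact: IHr].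
Qed.

End TreeInd.

Lemma nleaves_Node l : nleaves (Node l) = sumn (map nleaves l).
Proof. by elim: l => //= c r; rewrite /= => <-. Qed.

Lemma wf_Node d l : wf d (Node l) = (size l == d) && all (wf d) l.
Proof. by rewrite /=; congr andb; elim: l => //= c r ->. Qed.

Lemma wf_NodeP d l : wf d (Node l) ->
  size l = d /\ forall i, i < size l -> wf d (nth Leaf l i).
Proof. by rewrite wf_Node => /andP [/eqP ? /(all_nthP Leaf)]. Qed.

(* The address of a leaf is the sequence of child indices on the path from
   the root; [leaves t] lists them from left to right. *)
Fixpoint leaves (t : tree) : seq (seq nat) :=
  match t with
  | Leaf => [:: [::]]
  | Node l => (fix go (l : seq tree) (j : nat) := match l with [::] => [::]
       | c :: r => map (cons j) (leaves c) ++ go r j.+1 end) l 0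
  end.

Fixpoint leaves_from (l : seq tree) (j : nat) : seq (seq nat) :=
  match l with [::] => [::]
  | c :: r => map (cons j) (leaves c) ++ leaves_from r j.+1 end.

Lemma leaves_Node l : leaves (Node l) = leaves_from l 0.
Proof. by []. Qed.

Lemma size_leaves t : size (leaves t) = nleaves t.
Proof.
elim/tree_nth_ind: t => // l IH; rewrite leaves_Node nleaves_Node.
elim: l 0 IH => //= c r IHr j IH.
by rewrite size_cat size_map (IH 0) // (IHr j.+1) // => i; apply: (IH i.+1).
Qed.

Lemma mem_leaves_from l j a : a \in leaves_from l j <->
  exists i b, [/\ i < size l, b \in leaves (nth Leaf l i) & a = (j + i) :: b].
Proof.
elim: l j a => [|c r IH] j a /=; first by split => // -[i [b []]].
rewrite mem_cat; split.
- case/orP => [/mapP [b Hb ->]|/IH [i [b [Hi Hb ->]]]].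
  + by exists 0, b; rewrite addn0.
  + by exists i.+1, b; rewrite addSnnS.
- case=> -[|i] [b [Hi Hb ->]].
  + by apply/orP; left; apply/mapP; exists b; rewrite ?addn0.
  + by apply/orP; right; rewrite -addSnnS; apply/IH; exists i, b.
Qed.

Lemma mem_leaves_Node l a : a \in leaves (Node l) <->
  exists i b, [/\ i < size l, b \in leaves (nth Leaf l i) & a = i :: b].
Proof. exact: mem_leaves_from. Qed.

Lemma leaves_Node_neq_nil l a : a \in leaves (Node l) -> a <> [::].
Proof. by move/mem_leaves_Node => [i [b [_ _ ->]]]. Qed.

Lemma leaves_uniq t : uniq (leaves t).
Proof.
elim/tree_nth_ind: t => // l IH; rewrite leaves_Node.
elim: l 0 IH => //= c r IHr j IH.
rewrite cat_uniq map_inj_uniq ?(IH 0) ?IHr //; first last.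
- by move=> a b [].
- by move=> i; apply: (IH i.+1).
rewrite andbT; apply/hasPn => a /mem_leaves_from [i [b [_ _ ->]]].
by apply/mapP => -[e _ [E _]]; lia.
Qed.

Lemma leaves_dword d t a : wf d t -> a \in leaves t -> dword d a.
Proof.
elim/tree_nth_ind: t a => [|l IH] a; first by rewrite inE => _ /eqP ->.
move=> /wf_NodeP [Hl Hw] /mem_leaves_Node [i [b [Hi Hb ->]]] /=.
by rewrite (IH i Hi b (Hw i Hi) Hb) andbT -Hl.
Qed.

Definition dstream (d : nat) (s : nat -> nat) := forall n, s n < d.

Definition sprefix (a : seq nat) (s : nat -> nat) := mkseq s (size a) == a.
Definition scat (a : seq nat) (r : nat -> nat) : nat -> nat :=
  fun n => if n < size a then nth 0 a n else r (n - size a).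
Definition sdrop (k : nat) (s : nat -> nat) : nat -> nat := fun n => s (k + n).
Definition scons (i : nat) (s : nat -> nat) : nat -> nat :=
  fun n => if n is n'.+1 then s n' else i.

Lemma sprefixP a s : reflect (forall j, j < size a -> nth 0 a j = s j) (sprefix a s).
Proof.
apply: (iffP eqP) => [E j Hj|H]; first by rewrite -E nth_mkseq.
by apply: (@eq_from_nth _ 0); rewrite size_mkseq // => j Hj; rewrite nth_mkseq // H.
Qed.

Lemma sprefix_scat a r : sprefix a (scat a r).
Proof. by apply/sprefixP => j Hj; rewrite /scat Hj. Qed.

Lemma scat_sdrop a s : sprefix a s -> scat a (sdrop (size a) s) = s.
Proof.
move/sprefixP => H; apply: functional_extensionality => n; rewrite /scat /sdrop.
by case: ltnP => Hn; [exact: H|congr s; lia].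
Qed.

Lemma sdrop_scat a r : sdrop (size a) (scat a r) = r.
Proof.
apply: functional_extensionality => n; rewrite /scat /sdrop.
by case: ifP => H; [lia|congr r; lia].
Qed.

Lemma sdropD a b s : sdrop (a + b) s = sdrop b (sdrop a s).
Proof. by apply: functional_extensionality => n; rewrite /sdrop addnA. Qed.

Lemma scat_cat a b r : scat (a ++ b) r = scat a (scat b r).
Proof.
apply: functional_extensionality => n; rewrite /scat size_cat nth_cat.
case: (ltnP n (size a)) => H1; first by rewrite ifT //; lia.
have -> : (n - size a < size b) = (n < size a + size b) by lia.
by case: ltnP => // _; congr r; lia.
Qed.

Lemma scat_rcons a o e s : s e = o ->
  scat (rcons a o) (sdrop e.+1 s) = scat a (sdrop e s).
Proof.
move=> Ho; apply: functional_extensionality => n.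
rewrite /scat /sdrop size_rcons nth_rcons.
case: (ltnP n (size a)) => H1; first by rewrite ltnS ltnW.
case: (ltnP n (size a).+1) => H2; last by congr s; lia.
have -> : n = size a by lia.
by rewrite eqxx subnn addn0.
Qed.

Lemma dstream_scat d a r : dword d a -> dstream d r -> dstream d (scat a r).
Proof.
move=> /(all_nthP 0) Ha Hr n; rewrite /scat.
by case: (ltnP n (size a)) => H //; apply: Ha.
Qed.

Lemma dstream_sdrop d k s : dstream d s -> dstream d (sdrop k s).
Proof. by move=> H n; apply: H. Qed.

Lemma dstream_scons d i s : i < d -> dstream d s -> dstream d (scons i s).
Proof. by move=> Hi Hs n; case: n. Qed.

Lemma sprefix_cat a b s : sprefix (a ++ b) s = sprefix a s && sprefix b (sdrop (size a) s).
Proof.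
apply/sprefixP/andP => [H|[/sprefixP H1 /sprefixP H2] j].
  split; apply/sprefixP => j Hj.
  - by rewrite -H ?nth_cat ?Hj // size_cat; lia.
  - have := H (size a + j); rewrite /sdrop nth_cat size_cat ifF ?addKn; last by lia.
    by apply; lia.
rewrite size_cat nth_cat; case: (ltnP j (size a)) => Hj1 Hj2; first exact: H1.
by rewrite H2 /sdrop; [congr s; lia|lia].
Qed.

Lemma sprefix_rcons a o s : sprefix (rcons a o) s = sprefix a s && (s (size a) == o).
Proof.
rewrite -cats1 sprefix_cat; congr andb.
by apply/sprefixP/eqP => [/(_ 0 isT)|<- [|]] //; rewrite /sdrop addn0.
Qed.

Lemma sprefix_comparable a b s : sprefix a s -> sprefix b s -> size a <= size b ->
  a = take (size a) b.
Proof.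
move=> /sprefixP Ha /sprefixP Hb Hs.
apply: (@eq_from_nth _ 0); first by rewrite size_take_min; lia.
by move=> j Hj; rewrite nth_take // Ha // Hb //; lia.
Qed.

Lemma scat_inj d a b : 1 < d -> (forall r, dstream d r -> scat a r = scat b r) -> a = b.
Proof.
move=> Hd H.
have G0 : dstream d (fun _ => 0) by move=> n; lia.
have G1 : dstream d (fun _ => 1) by [].
have Hn r n : dstream d r -> scat a r n = scat b r n by move=> Hr; rewrite H.
have Hs : size a = size b.
  apply/eqP; rewrite eqn_leq; apply/andP; split; rewrite leqNgt; apply/negP => Hlt.
  - have := Hn _ (size b) G0; have := Hn _ (size b) G1.
    by rewrite /scat Hlt ltnn ?subnn => ->.
  - have := Hn _ (size a) G0; have := Hn _ (size a) G1.
    by rewrite /scat Hlt ltnn ?subnn => <-.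
apply: (@eq_from_nth _ 0 _ _ Hs) => j Hj.
by have := Hn _ j G0; rewrite /scat Hj -Hs Hj.
Qed.

Lemma has_sprefix_leaves d t s : wf d t -> dstream d s -> has (sprefix^~ s) (leaves t).
Proof.
elim/tree_nth_ind: t s => [|l IH] s; first by rewrite /= /sprefix.
move=> /wf_NodeP [Hl Hw] Hs; have H0 : s 0 < size l by rewrite Hl.
have /hasP [b Hb Hp] := IH _ H0 (sdrop 1 s) (Hw _ H0) (dstream_sdrop 1 Hs).
apply/hasP; exists (s 0 :: b); first by apply/mem_leaves_Node; exists (s 0), b.
by apply/sprefixP => -[|j] //= Hj; move/sprefixP: Hp => ->.
Qed.

Lemma leaves_prefix_free t a b : a \in leaves t -> b \in leaves t ->
  a = take (size a) b -> a = b.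
Proof.
elim/tree_nth_ind: t a b => [|l IH] a b; first by rewrite !inE => /eqP -> /eqP ->.
move=> /mem_leaves_Node [i [a' [Hi Ha ->]]] /mem_leaves_Node [i' [b' [_ Hb ->]]] /=.
by case=> Ei E; subst i'; rewrite (IH i Hi a' b' Ha Hb E).
Qed.

Definition leaf_index (t : tree) (s : nat -> nat) := find (sprefix^~ s) (leaves t).
Definition leaf_prefix (t : tree) (s : nat -> nat) := nth [::] (leaves t) (leaf_index t s).

Lemma leaf_indexE t s j : j < nleaves t -> sprefix (nth [::] (leaves t) j) s ->
  leaf_index t s = j.
Proof.
rewrite -size_leaves => Hj Hp.
have Hh : has (sprefix^~ s) (leaves t).
  by apply/hasP; exists (nth [::] (leaves t) j); rewrite ?mem_nth.
have Hi : leaf_index t s < size (leaves t) by rewrite -has_find.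
have Hpi : sprefix (leaf_prefix t s) s := nth_find [::] Hh.
have E : leaf_prefix t s = nth [::] (leaves t) j.
  have [Hs|Hs] := leqP (size (leaf_prefix t s)) (size (nth [::] (leaves t) j)).
    exact: leaves_prefix_free (mem_nth _ Hi) (mem_nth _ Hj) (sprefix_comparable Hpi Hp Hs).
  symmetry; apply: leaves_prefix_free (mem_nth _ Hj) (mem_nth _ Hi) _.
  by apply: sprefix_comparable Hp Hpi _; lia.
by apply/eqP; rewrite -(nth_uniq [::] Hi Hj (leaves_uniq t)) -E.
Qed.

Section LeafPrefix.
Variables (d : nat) (t : tree) (s : nat -> nat).
Hypotheses (wf_t : wf d t) (s_d : dstream d s).

Lemma leaf_index_lt : leaf_index t s < nleaves t.
Proof. by rewrite /leaf_index -size_leaves -has_find; exact: has_sprefix_leaves wf_t s_d. Qed.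

Lemma leaf_prefixP : leaf_prefix t s \in leaves t /\ sprefix (leaf_prefix t s) s.
Proof.
split; first by rewrite /leaf_prefix mem_nth // size_leaves leaf_index_lt.
exact: (nth_find [::] (has_sprefix_leaves wf_t s_d)).
Qed.

End LeafPrefix.

Lemma leaf_prefix_mem t s a : a \in leaves t -> sprefix a s -> leaf_prefix t s = a.
Proof.
move=> Ha Hp; rewrite /leaf_prefix (@leaf_indexE _ _ (index a (leaves t))) ?nth_index //.
by rewrite -size_leaves index_mem.
Qed.

Lemma leaf_prefix_Node d l i s : wf d (Node l) -> i < size l -> dstream d s ->
  leaf_prefix (Node l) (scons i s) = i :: leaf_prefix (nth Leaf l i) s.
Proof.
move=> /wf_NodeP [_ Hw] Hi Hs; have [Hm Hp] := leaf_prefixP (Hw i Hi) Hs.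
apply: leaf_prefix_mem; first by apply/mem_leaves_Node; exists i, (leaf_prefix (nth Leaf l i) s).
by apply/sprefixP => -[|j] //= Hj; move/sprefixP: Hp => ->.
Qed.

Lemma tree_eq_leaf_prefix d T U : 0 < d -> wf d T -> wf d U ->
  (forall s, dstream d s -> leaf_prefix T s = leaf_prefix U s) -> T = U.
Proof.
move=> Hd; have G0 : dstream d (fun _ => 0) by [].
elim/tree_nth_ind: T U => [|l IH] [|l'] HT HU H //.
- have [Hm _] := leaf_prefixP HU G0.
  by move: Hm; rewrite -H // => /leaves_Node_neq_nil.
- have [Hm _] := leaf_prefixP HT G0.
  by move: Hm; rewrite H // => /leaves_Node_neq_nil.
have [Hl Hw] := wf_NodeP HT; have [Hl' Hw'] := wf_NodeP HU.
congr Node; apply: (@eq_from_nth _ Leaf); first by rewrite Hl Hl'.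
move=> i Hi; have Hi' : i < size l' by rewrite Hl' -Hl.
have Hid : i < d by rewrite -Hl.
apply: IH (Hw i Hi) (Hw' i Hi') _ => // s Hs.
have := H (scons i s) (dstream_scons Hid Hs).
by rewrite (leaf_prefix_Node HT Hi Hs) (leaf_prefix_Node HU Hi' Hs) => -[].
Qed.

(** * Grafting and the permutations (sigma) varsigma_k *)

Fixpoint subst_leaf (t : tree) (k : nat) (S : tree) : tree :=
  match t with
  | Leaf => if k == 0 then S else Leaf
  | Node l => Node ((fix go (l : seq tree) (k : nat) : seq tree :=
        match l with [::] => [::]
        | c :: r => if k < nleaves c then subst_leaf c k S :: r
                    else c :: go r (k - nleaves c) end) l k)
  end.

Fixpoint subst_children (l : seq tree) (k : nat) (S : tree) : seq tree :=
  match l with [::] => [::]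
  | c :: r => if k < nleaves c then subst_leaf c k S :: r
              else c :: subst_children r (k - nleaves c) S end.

Lemma subst_leaf_Node l k S : subst_leaf (Node l) k S = Node (subst_children l k S).
Proof. by rewrite /=; congr Node; elim: l k => //= c r IH k; rewrite IH. Qed.

Definition caret d := Node (nseq d Leaf).

Lemma graftE d t k : graft d t k = subst_leaf t k (caret d).
Proof.
elim/tree_nth_ind: t k => // l IH k /=; congr Node.
elim: l k IH => //= c r IHr k IH; case: ifP => _; first by rewrite (IH 0).
by rewrite IHr // => i; apply: (IH i.+1).
Qed.

Lemma nth_splice (T : Type) (x0 : T) (L M : seq T) i j : i < size L ->
  nth x0 (take i L ++ M ++ drop i.+1 L) j =
  if j < i then nth x0 L j else if j < i + size M then nth x0 M (j - i)
  else nth x0 L (j.+1 - size M).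
Proof.
move=> Hi; rewrite nth_cat size_take Hi.
case: ltnP => Hj; first by rewrite nth_take.
rewrite nth_cat; case: ltnP => Hj2; first by rewrite ifT //; lia.
by rewrite ifF ?nth_drop; [congr nth; lia|lia].
Qed.

Lemma drop_cat_leq (T : Type) n (A B : seq T) : n <= size A ->
  drop n (A ++ B) = drop n A ++ B.
Proof. by elim: A n => [|a A IH] [|n] //=; [case: B|move=> H; rewrite IH]. Qed.

Lemma leaves_subst_leaf t k S : k < nleaves t ->
  leaves (subst_leaf t k S) = take k (leaves t) ++
     map (cat (nth [::] (leaves t) k)) (leaves S) ++ drop k.+1 (leaves t).
Proof.
elim/tree_nth_ind: t k => [|l IH] k.
  by case: k => // _ /=; rewrite cats0; elim: (leaves S) => //= a s {1}->.
rewrite nleaves_Node subst_leaf_Node !leaves_Node.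
elim: l k 0 IH => //= c r IHr k j IH Hk2; have Hsz := size_leaves c.
case: ifP => Hk /=.
  rewrite (IH 0) // !map_cat -!catA take_cat size_map Hsz Hk map_take.
  rewrite nth_cat size_map Hsz Hk drop_cat_leq ?size_map ?Hsz //.
  by rewrite (nth_map [::]) ?Hsz // map_drop -map_comp.
rewrite IHr; first last.
- by lia.
- by move=> i; apply: (IH i.+1).
rewrite take_cat size_map Hsz ltnNge leqNgt Hk /= nth_cat size_map Hsz ltnNge leqNgt Hk /=.
rewrite drop_cat size_map Hsz ifF; last by lia.
by rewrite -!catA; do 3 congr cat; congr drop; lia.
Qed.

Lemma wf_subst_leaf d t k S : wf d t -> wf d S -> wf d (subst_leaf t k S).
Proof.
move=> + HS; elim/tree_nth_ind: t k => [|l IH] k; first by case: k.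
rewrite subst_leaf_Node !wf_Node.
have -> : size (subst_children l k S) = size l.
  by elim: l k {IH} => //= c r IH k; case: ifP; rewrite /= ?IH.
case/andP => -> /=.
elim: l k IH => //= c r IHr k IH /andP [Hwc Hwr].
case: ifP => _ /=; first by rewrite (IH 0).
by rewrite Hwc IHr // => i; apply: (IH i.+1).
Qed.

Lemma nleaves_subst_leaf t k S : k < nleaves t ->
  nleaves (subst_leaf t k S) = nleaves t - 1 + nleaves S.
Proof.
move=> Hk; rewrite -!size_leaves leaves_subst_leaf // !size_cat size_map size_take size_drop.
by rewrite size_leaves Hk; lia.
Qed.

Lemma leaves_caret d : leaves (caret d) = [seq [:: i] | i <- iota 0 d].
Proof. by rewrite /caret leaves_Node; elim: d 0 => //= d IH j; rewrite IH. Qed.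

Lemma nth_leaves_caret d j : j < d -> nth [::] (leaves (caret d)) j = [:: j].
Proof. by move=> Hj; rewrite leaves_caret (nth_map 0) ?size_iota ?nth_iota. Qed.

Lemma wf_caret d : wf d (caret d).
Proof. by rewrite /caret wf_Node size_nseq eqxx all_nseq orbT. Qed.

Lemma nleaves_caret d : nleaves (caret d) = d.
Proof. by rewrite -size_leaves leaves_caret size_map size_iota. Qed.

Definition graft_addrs d (L : seq (seq nat)) k :=
  take k L ++ [seq rcons (nth [::] L k) o | o <- iota 0 d] ++ drop k.+1 L.

Lemma leaves_graft d t k : k < nleaves t -> leaves (graft d t k) = graft_addrs d (leaves t) k.
Proof.
move=> Hk; rewrite graftE leaves_subst_leaf // leaves_caret /graft_addrs -map_comp.
by congr (_ ++ _ ++ _); apply: eq_map => o /=; rewrite cats1.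
Qed.

Lemma wf_graft d t k : wf d t -> wf d (graft d t k).
Proof. by move=> H; rewrite graftE; apply: wf_subst_leaf => //; apply: wf_caret. Qed.

Lemma nleaves_graft d t k : 0 < d -> k < nleaves t ->
  nleaves (graft d t k) = nleaves t + (d - 1).
Proof. by move=> Hd Hk; rewrite graftE nleaves_subst_leaf // nleaves_caret; lia. Qed.

Lemma nth_graft_addrs d L k j : k < size L ->
  nth [::] (graft_addrs d L k) j = if j < k then nth [::] L j else if j < k + d
  then rcons (nth [::] L k) (j - k) else nth [::] L (j.+1 - d).
Proof.
move=> Hk; rewrite /graft_addrs nth_splice // size_map size_iota.
case: ifP => // Hj1; case: ifP => // Hj.
by rewrite (nth_map 0) ?size_iota ?nth_iota //; lia.
Qed.

Section Pnat.
Variables (n : nat) (s : 'S_n).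

Lemma pnat_Ordinal j (H : j < n) : pnat s j = val (s (Ordinal H)).
Proof. by rewrite /pnat insubT /=; congr (val (s _)); apply: val_inj. Qed.

Lemma pnat_ord (i : 'I_n) : pnat s i = val (s i).
Proof. by rewrite (pnat_Ordinal (ltn_ord i)); congr (val (s _)); apply: val_inj. Qed.

Lemma pnat_out j : n <= j -> pnat s j = j.
Proof. by move=> H; rewrite /pnat insubF //; lia. Qed.

Lemma pnat_lt j : j < n -> pnat s j < n.
Proof. by move=> H; rewrite (pnat_Ordinal H) ltn_ord. Qed.

Lemma pnat_inj i j : i < n -> j < n -> pnat s i = pnat s j -> i = j.
Proof. by move=> Hi Hj; rewrite (pnat_Ordinal Hi) (pnat_Ordinal Hj) => /val_inj /perm_inj [->]. Qed.

End Pnat.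

Lemma pnat1 n j : pnat (1 : 'S_n)%g j = j.
Proof. by case: (ltnP j n) => H; [rewrite (pnat_Ordinal _ H) perm1|rewrite pnat_out]. Qed.

Lemma pnat_permM n (s t : 'S_n) j : pnat (s * t)%g j = pnat t (pnat s j).
Proof.
case: (ltnP j n) => H; last by rewrite !pnat_out.
rewrite (pnat_Ordinal _ H) permM (pnat_Ordinal _ (pnat_lt s H)); congr (val (t _)).
by apply: val_inj; rewrite /= (pnat_Ordinal s H).
Qed.

Lemma pnatK n (s : 'S_n) j : pnat (s^-1)%g (pnat s j) = j.
Proof. by rewrite -pnat_permM mulgV pnat1. Qed.

Lemma pnatVK n (s : 'S_n) j : pnat s (pnat (s^-1)%g j) = j.
Proof. by rewrite -pnat_permM mulVg pnat1. Qed.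

Lemma pnat_perm_inj n (s t : 'S_n) : (forall j, j < n -> pnat s j = pnat t j) -> s = t.
Proof. by move=> H; apply/permP => i; apply: val_inj; rewrite -!pnat_ord H. Qed.

(* [1] is a junk value for non-injective [f]; see [pnat_perm_of_fun]. *)
Definition perm_of_fun n (f : nat -> nat) : 'S_n :=
  match injectiveP (fun i : 'I_n => insubd i (f i)) with
  | ReflectT H => perm H | ReflectF _ => 1%g end.

Lemma pnat_perm_of_fun n f : (forall i, i < n -> f i < n) ->
  (forall i j, i < n -> j < n -> f i = f j -> i = j) ->
  forall i, i < n -> pnat (perm_of_fun n f) i = f i.
Proof.
move=> Hb Hi i Hin; rewrite (pnat_Ordinal _ Hin) /perm_of_fun.
case: injectiveP => H; first by rewrite (permE H (Ordinal Hin)) val_insubd /= Hb.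
exfalso; apply: H => a b /(congr1 val); rewrite !val_insubd !Hb // => E.
exact/val_inj/(Hi a b (ltn_ord a) (ltn_ord b) E).
Qed.

Section Varsigma.
Variables (d : nat) (d_gt0 : 0 < d).

Lemma blk_bstart k l o : (l != k -> o = 0) -> o < d ->
  blk d k (bstart d k l + o) = l /\ offs d k (bstart d k l + o) = o.
Proof.
move=> Ho Hod; rewrite /blk /offs /bstart.
case: (ltngtP l k) => Hlk; last by subst l; rewrite ifF ?ifT; lia.
all: have -> : o = 0 by apply: Ho; lia.
all: by rewrite addn0; split; repeat case: ifP => ?; lia.
Qed.

Lemma bstart_lt n k l o : k < n -> l < n -> (l != k -> o = 0) -> o < d ->
  bstart d k l + o < n + (d - 1).
Proof.
move=> Hk Hl Ho Hod; rewrite /bstart.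
case: (ltngtP l k) => Hlk; last by lia.
all: (have -> : o = 0 by apply: Ho; lia); lia.
Qed.

Lemma bstart_blk k i : i = bstart d k (blk d k i) + offs d k i.
Proof.
rewrite /bstart /blk /offs.
case: (ltnP i k) => H1; case: (ltnP i (k + d)) => H2.
all: by repeat (case: ifP => ?); rewrite /= ?addn0; lia.
Qed.

Lemma blk_lt n k i : k < n -> i < n + (d - 1) -> blk d k i < n.
Proof. by move=> Hk Hi; rewrite /blk; repeat (case: ifP => ?); lia. Qed.

Lemma offs_lt k i : offs d k i < d.
Proof. by rewrite /offs; repeat (case: ifP => ?); lia. Qed.

Lemma offs0 k i : blk d k i != k -> offs d k i = 0.
Proof. by rewrite /blk /offs; repeat (case: ifP => ?); rewrite /= ?eqxx //; lia. Qed.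

Lemma nth_graft_addrs_bstart L k l : k < size L -> l < size L -> l != k ->
  nth [::] (graft_addrs d L k) (bstart d k l) = nth [::] L l.
Proof.
move=> Hk Hl Hlk; rewrite nth_graft_addrs // /bstart.
case: (ltngtP l k) => H; first by rewrite H.
- by rewrite !ifF; [congr nth| |]; lia.
- by move: Hlk; rewrite H eqxx.
Qed.

Lemma nth_graft_addrs_caret L k o : k < size L -> o < d ->
  nth [::] (graft_addrs d L k) (bstart d k k + o) = rcons (nth [::] L k) o.
Proof.
move=> Hk Ho; rewrite nth_graft_addrs // /bstart ltnn eqxx.
by rewrite ifF 1?ifT ?addKn //; lia.
Qed.

Variables (n : nat) (s : 'S_n) (k : nat) (k_lt : k < n).

Lemma offs_varsigma0 l : l < n + (d - 1) ->
  pnat s (blk d k l) != pnat s k -> offs d k l = 0.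
Proof. by move=> Hl H; apply: offs0; apply: contra H => /eqP ->. Qed.

Lemma varsigma_lt i : i < n + (d - 1) -> varsigma d s k i < n + (d - 1).
Proof.
move=> Hi; apply: bstart_lt; [exact: pnat_lt|exact/pnat_lt/blk_lt| |exact: offs_lt].
exact: offs_varsigma0.
Qed.

Lemma varsigma_inj i j : i < n + (d - 1) -> j < n + (d - 1) ->
  varsigma d s k i = varsigma d s k j -> i = j.
Proof.
move=> Hi Hj; rewrite /varsigma => E.
have [Bi Oi] := blk_bstart (offs_varsigma0 Hi) (offs_lt k i).
have [Bj Oj] := blk_bstart (offs_varsigma0 Hj) (offs_lt k j).
rewrite E Bj in Bi; rewrite E Oj in Oi.
have Eb : blk d k i = blk d k j by apply: (pnat_inj (s := s)); rewrite ?Bi //; exact: blk_lt.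
by rewrite (bstart_blk k i) (bstart_blk k j) Eb Oi.
Qed.

End Varsigma.

(** * The action on infinite words *)

Lemma validP d x : valid d x ->
  [/\ wf d (tT x), wf d (tU x), nleaves (tT x) = tn x & nleaves (tU x) = tn x].
Proof. by case/and4P => ? ? /eqP ? /eqP ?. Qed.

(* [T, sigma, U] maps the cylinder of the i-th leaf of U onto the cylinder of
   the (sigma i)-th leaf of T. *)
Definition tact (x : triple) (s : nat -> nat) : nat -> nat :=
  let i := leaf_index (tU x) s in
  scat (nth [::] (leaves (tT x)) (pnat (tsig x) i))
       (sdrop (size (nth [::] (leaves (tU x)) i)) s).

Lemma tact_scat x i r : i < tn x -> nleaves (tU x) = tn x ->
  tact x (scat (nth [::] (leaves (tU x)) i) r) =
  scat (nth [::] (leaves (tT x)) (pnat (tsig x) i)) r.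
Proof.
move=> Hi Hn; rewrite /tact (@leaf_indexE _ _ i) ?Hn ?sprefix_scat //.
by rewrite sdrop_scat.
Qed.

Lemma tactP d x s : valid d x -> dstream d s ->
  exists i, [/\ i < tn x, sprefix (nth [::] (leaves (tU x)) i) s &
   tact x s = scat (nth [::] (leaves (tT x)) (pnat (tsig x) i))
       (sdrop (size (nth [::] (leaves (tU x)) i)) s)].
Proof.
move=> /validP [_ wU _ nU] Hs; exists (leaf_index (tU x) s).
have Hi : leaf_index (tU x) s < tn x by rewrite -nU (leaf_index_lt wU Hs).
by split => //; case: (leaf_prefixP wU Hs).
Qed.

Lemma dstream_tact d x s : valid d x -> dstream d s -> dstream d (tact x s).
Proof.
move=> Vx Hs; have [wT _ nT _] := validP Vx; have [i [Hi _ ->]] := tactP Vx Hs.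
apply: dstream_scat (dstream_sdrop _ Hs); apply: (leaves_dword wT).
by rewrite mem_nth // size_leaves nT pnat_lt.
Qed.

Section ExpandAction.
Variables (d : nat) (x y : triple) (k : 'I_(tn x)).
Hypotheses (d_gt0 : 0 < d) (x_valid : valid d x) (tn_y : tn y = tn x + (d - 1))
  (tT_y : tT y = graft d (tT x) (val (tsig x k))) (tU_y : tU y = graft d (tU x) k)
  (tsig_y : forall i : 'I_(tn y), val (tsig y i) = varsigma d (tsig x) k i).

Lemma leaves_tU_expand : leaves (tU y) = graft_addrs d (leaves (tU x)) k.
Proof. by have [_ _ _ nU] := validP x_valid; rewrite tU_y leaves_graft ?nU. Qed.

Lemma leaves_tT_expand : leaves (tT y) = graft_addrs d (leaves (tT x)) (pnat (tsig x) k).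
Proof.
have [_ _ nT _] := validP x_valid.
by rewrite tT_y -pnat_ord leaves_graft // nT pnat_lt.
Qed.

Lemma nleaves_tU_expand : nleaves (tU y) = tn y.
Proof. by have [_ _ _ nU] := validP x_valid; rewrite tU_y tn_y nleaves_graft ?nU // -nU. Qed.

Lemma size_leaves_expand : size (leaves (tU x)) = tn x /\ size (leaves (tT x)) = tn x.
Proof. by have [_ _ nT nU] := validP x_valid; rewrite !size_leaves. Qed.

Lemma tact_expand_caret s : sprefix (nth [::] (leaves (tU x)) k) s -> dstream d s ->
  tact y s = tact x s.
Proof.
move=> Hp Hs; have [szU szT] := size_leaves_expand; have [_ _ _ nU] := validP x_valid.
(* the letter of [s] after the k-th leaf of U selects a leaf of the new caret *)
set e := size (nth [::] (leaves (tU x)) k); set o := s e; have Ho : o < d := Hs e.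
have Hok : k != k -> o = 0 by rewrite eqxx.
have Hlt : bstart d k k + o < tn y by rewrite tn_y bstart_lt.
have Hp' : sprefix (nth [::] (leaves (tU y)) (bstart d k k + o)) s.
  by rewrite leaves_tU_expand nth_graft_addrs_caret ?szU // sprefix_rcons Hp eqxx.
rewrite /tact (leaf_indexE (j := bstart d k k + o)) ?nleaves_tU_expand //.
rewrite (@leaf_indexE _ _ k) ?nU //.
rewrite (pnat_Ordinal _ Hlt) tsig_y /varsigma.
case: (blk_bstart d_gt0 Hok Ho) => -> ->.
rewrite leaves_tT_expand leaves_tU_expand !nth_graft_addrs_caret ?szU ?szT ?pnat_lt //.
by rewrite size_rcons scat_rcons.
Qed.

Lemma tact_expand_off i s : i < tn x -> i != k ->
  sprefix (nth [::] (leaves (tU x)) i) s -> tact y s = tact x s.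
Proof.
move=> Hi Eik Hp; have [szU szT] := size_leaves_expand; have [_ _ _ nU] := validP x_valid.
have [Bi Oi] := blk_bstart (k := k) (l := i) d_gt0 (fun _ => erefl) d_gt0.
rewrite addn0 in Bi Oi.
have Hlt : bstart d k i < tn y by rewrite tn_y -(addn0 (bstart _ _ _)) bstart_lt.
have Hp' : sprefix (nth [::] (leaves (tU y)) (bstart d k i)) s.
  by rewrite leaves_tU_expand nth_graft_addrs_bstart ?szU.
rewrite /tact (leaf_indexE (j := bstart d k i)) ?nleaves_tU_expand //.
rewrite (@leaf_indexE _ _ i) ?nU //.
rewrite (pnat_Ordinal _ Hlt) tsig_y /varsigma Bi Oi addn0.
have Hne : pnat (tsig x) i != pnat (tsig x) k.
  by apply: contra Eik => /eqP /(pnat_inj Hi (ltn_ord k)) ->.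
rewrite leaves_tT_expand leaves_tU_expand.
by rewrite !nth_graft_addrs_bstart ?szU ?szT ?pnat_lt.
Qed.

End ExpandAction.

Lemma tact_expand d x y s : 0 < d -> expand d x y -> dstream d s -> tact y s = tact x s.
Proof.
move=> Hd [Vx [k [Htn HT HU Hsig]]] Hs; have [i [Hi Hp _]] := tactP Vx Hs.
have [Eik | Eik] := eqVneq i k.
  by rewrite Eik in Hp; apply: (tact_expand_caret Hd Vx Htn HT HU Hsig).
exact: (tact_expand_off Hd Vx Htn HT HU Hsig Hi Eik Hp).
Qed.

Lemma tact_tequiv d x y s : 0 < d -> tequiv d x y -> dstream d s -> tact x s = tact y s.
Proof.
move=> Hd H; elim: H s => [a b Hab|a|a b _ IH|a b c _ IH1 _ IH2] s Hs //.
- by rewrite (tact_expand Hd Hab Hs).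
- by rewrite IH.
- by rewrite IH1 // IH2.
Qed.

Lemma tact_tid s : tact tid s = s.
Proof. by apply: functional_extensionality => n; rewrite /tact /= pnat1 /scat /sdrop subn0. Qed.

Lemma valid_tinv d x : valid d x -> valid d (tinv x).
Proof. by case/and4P => *; apply/and4P. Qed.

Lemma tact_tmul d x y z s : 0 < d -> tmul d x y z -> dstream d s ->
  tact z s = tact x (tact y s).
Proof.
move=> Hd [a [b [c [[Va [Vb Vc]] [[Ea [Eb Ec]] [[Nac Nbc] [[Tca [Uab Ucb]] Hp]]]]]]] Hs.
rewrite (tact_tequiv Hd Ec Hs) (tact_tequiv Hd Eb Hs) (tact_tequiv Hd Ea (dstream_tact Vb Hs)).
have [_ wUc _ nUc] := validP Vc; have [_ _ _ nUa] := validP Va.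
have Hi : leaf_index (tU c) s < tn c by rewrite -nUc (leaf_index_lt wUc Hs).
rewrite /tact Hp // Ucb; rewrite Ucb in Hi.
have Hj : pnat (tsig b) (leaf_index (tU b) s) < tn a by rewrite Nac -Nbc pnat_lt ?Nbc.
by rewrite -/(tact a _) -Uab tact_scat // Tca.
Qed.

Lemma tactK d x s : valid d x -> dstream d s -> tact (tinv x) (tact x s) = s.
Proof.
move=> Vx Hs; have [i [Hi Hp ->]] := tactP Vx Hs; have [_ _ nT _] := validP Vx.
by rewrite (@tact_scat (tinv x)) ?pnat_lt //= pnatK scat_sdrop.
Qed.

Lemma tact_fixV d x s : valid d x -> dstream d s -> tact x s = s -> tact (tinv x) s = s.
Proof. by move=> Vx Hs H; rewrite -{1}H (tactK Vx Hs). Qed.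

Lemma tactV d x s s' : valid d x -> dstream d s' -> tact x s' = s -> tact (tinv x) s = s'.
Proof. by move=> Vx Hs <-; rewrite (tactK Vx Hs). Qed.

(** * Expansions and products *)

Definition expansion d (x : triple) (k : nat) : triple :=
  @Triple (tn x + (d - 1)) (graft d (tT x) (pnat (tsig x) k)) (graft d (tU x) k)
     (perm_of_fun (tn x + (d - 1)) (varsigma d (tsig x) k)).

Section Expansion.
Variables (d : nat) (x : triple) (k : nat).
Hypotheses (d_gt0 : 0 < d) (k_lt : k < tn x).

Lemma pnat_expansion i : i < tn x + (d - 1) ->
  pnat (tsig (expansion d x k)) i = varsigma d (tsig x) k i.
Proof.
apply: pnat_perm_of_fun => [j|a b]; first exact: varsigma_lt.
exact: varsigma_inj.
Qed.

Lemma expand_expansion : valid d x -> valid d (expansion d x k) /\ expand d x (expansion d x k).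
Proof.
move=> Vx; have [wT wU nT nU] := validP Vx.
split; first by apply/and4P; split; rewrite /= ?wf_graft ?nleaves_graft ?nT ?nU ?pnat_lt.
split => //; exists (Ordinal k_lt); split => //= [|i].
- by rewrite (pnat_Ordinal _ k_lt).
- by rewrite -pnat_ord pnat_expansion.
Qed.

Lemma tsig_expansion1 : tsig x = 1%g -> tsig (expansion d x k) = 1%g.
Proof.
move=> H1; apply: pnat_perm_inj => i Hi.
by rewrite pnat1 pnat_expansion // H1 /varsigma !pnat1 -bstart_blk.
Qed.

End Expansion.

Definition graft_step d (a b : tree) := exists2 k, k < nleaves a & b = graft d a k.
Definition refines d := clos_refl_trans tree (graft_step d).

Lemma graft_Node_cat d l1 c l2 k : k < nleaves c ->
  graft d (Node (l1 ++ c :: l2)) (sumn (map nleaves l1) + k) = Node (l1 ++ graft d c k :: l2).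
Proof.
move=> Hk /=; congr Node; elim: l1 => /= [|c' l1 IH]; first by rewrite Hk.
by rewrite -addnA ifF ?addKn ?IH //; lia.
Qed.

Lemma refines_Node_cat d l1 c c' l2 : refines d c c' ->
  refines d (Node (l1 ++ c :: l2)) (Node (l1 ++ c' :: l2)).
Proof.
elim => [a b [k Hk ->]|a|a b e _ IH1 _ IH2]; last 2 first.
- exact: rt_refl.
- exact: rt_trans IH1 IH2.
apply: rt_step; exists (sumn (map nleaves l1) + k); last by rewrite graft_Node_cat.
by rewrite nleaves_Node map_cat sumn_cat /=; lia.
Qed.

Lemma refines_children d l l' : size l = size l' ->
  (forall i, i < size l -> refines d (nth Leaf l i) (nth Leaf l' i)) ->
  refines d (Node l) (Node l').
Proof.
rewrite -[Node l]/(Node ([::] ++ l)) -[Node l']/(Node ([::] ++ l')).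
elim: l l' [::] => [|c r IH] [|c' r'] // p Hs H; first exact: rt_refl.
apply: rt_trans (refines_Node_cat p r (H 0 isT)) _.
by rewrite -cat_rcons -(cat_rcons c'); apply: IH => [|i]; [case: Hs|apply: (H i.+1)].
Qed.

Lemma refines_Leaf d t : 0 < d -> wf d t -> refines d Leaf t.
Proof.
move=> Hd; elim/tree_nth_ind: t => [|l IH]; first by move=> _; apply: rt_refl.
move=> /wf_NodeP [Hl Hw]; apply: (@rt_trans _ _ _ (caret d)).
  by apply: rt_step; exists 0.
apply: refines_children => [|i]; first by rewrite size_nseq.
by rewrite size_nseq nth_nseq if_same => Hi; rewrite -Hl in Hi; apply: IH (Hw i Hi).
Qed.

Lemma seq_choice (T : Type) (x0 : T) (P : nat -> T -> Prop) n :
  (forall i, i < n -> exists v, P i v) ->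
  exists vs, size vs = n /\ forall i, i < n -> P i (nth x0 vs i).
Proof.
elim: n P => [|n IH] P H; first by exists [::].
have [v Hv] := H 0 isT; have [vs [Hs Hvs]] := IH (fun i => P i.+1) (fun i => H i.+1).
by exists (v :: vs); split => [|[|i] Hi] /=; [rewrite Hs|exact: Hv|exact: Hvs].
Qed.

Lemma common_refinement d T U : 0 < d -> wf d T -> wf d U ->
  exists V, refines d T V /\ refines d U V.
Proof.
move=> Hd; elim/tree_nth_ind: T U => [|l IH] [|l'] HT HU.
- by exists Leaf; split; apply: rt_refl.
- by exists (Node l'); split; [exact: refines_Leaf|exact: rt_refl].
- by exists (Node l); split; [exact: rt_refl|exact: refines_Leaf].
have [Hl Hw] := wf_NodeP HT; have [Hl' Hw'] := wf_NodeP HU.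
have Hc i : i < d ->
    exists v, refines d (nth Leaf l i) v /\ refines d (nth Leaf l' i) v.
  move=> Hi; rewrite -Hl in Hi; have Hi' : i < size l' by rewrite Hl' -Hl.
  exact: IH (Hw i Hi) (Hw' i Hi').
have [vs [Hs Hvs]] := seq_choice Leaf Hc.
exists (Node vs); split; apply: refines_children; rewrite ?Hl ?Hl' ?Hs // => i Hi.
- by case: (Hvs i Hi).
- by case: (Hvs i Hi).
Qed.

Lemma refine_tU d U U' : 0 < d -> refines d U U' -> forall x, valid d x -> tU x = U ->
  exists x', [/\ valid d x', tequiv d x x', tU x' = U',
    (tsig x = 1%g -> tsig x' = 1%g) & (tsig x = 1%g -> tT x = tU x -> tT x' = tU x')].
Proof.
move=> Hd; elim => [a b [k Hk ->]|a|a b e _ IH1 _ IH2] x Vx Ex.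
- have [_ _ _ nU] := validP Vx; have Hk' : k < tn x by rewrite -nU Ex.
  have [V' Ex'] := expand_expansion Hd Hk' Vx.
  exists (expansion d x k); split => //; first exact: rst_step.
  + by rewrite /= Ex.
  + exact: tsig_expansion1.
  + by move=> H1 HTU; rewrite /= H1 pnat1 HTU.
- by exists x; split => //; apply: rst_refl.
- have [y [Vy Exy Ey Hy1 Hy2]] := IH1 x Vx Ex.
  have [z [Vz Eyz Ez Hz1 Hz2]] := IH2 y Vy Ey.
  exists z; split => //; first exact: rst_trans Exy Eyz.
  + by move=> H; apply/Hz1/Hy1.
  + by move=> H HH; apply: Hz2; [apply: Hy1|apply: Hy2].
Qed.

Lemma refine_tT d T T' : 0 < d -> refines d T T' -> forall x, valid d x -> tT x = T ->
  exists x', [/\ valid d x', tequiv d x x', tT x' = T' & (tsig x = 1%g -> tsig x' = 1%g)].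
Proof.
move=> Hd; elim => [a b [m Hm ->]|a|a b e _ IH1 _ IH2] x Vx Ex.
- have [_ _ nT _] := validP Vx; have Hm' : m < tn x by rewrite -nT Ex.
  have Hk : pnat (tsig x)^-1 m < tn x by apply: pnat_lt.
  have [V' Ex'] := expand_expansion Hd Hk Vx.
  exists (expansion d x (pnat (tsig x)^-1 m)); split => //; first exact: rst_step.
  + by rewrite /= pnatVK Ex.
  + exact: tsig_expansion1.
- by exists x; split => //; apply: rst_refl.
- have [y [Vy Exy Ey Hy1]] := IH1 x Vx Ex.
  have [z [Vz Eyz Ez Hz1]] := IH2 y Vy Ey.
  by exists z; split => //; [exact: rst_trans Exy Eyz|move=> H; apply/Hz1/Hy1].
Qed.

Lemma tmul_matched d x y : valid d x -> valid d y -> tU x = tT y ->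
  exists z, [/\ valid d z, tmul d x y z & (tsig x = 1%g -> tsig y = 1%g -> tsig z = 1%g)].
Proof.
move=> Vx Vy Exy; have [wTx wUx nTx nUx] := validP Vx; have [wTy wUy nTy nUy] := validP Vy.
have Nxy : tn x = tn y by rewrite -nUx -nTy Exy.
set f := fun i => pnat (tsig x) (pnat (tsig y) i).
have Hf i : i < tn y -> pnat (perm_of_fun (tn y) f) i = f i.
  have Hy j : j < tn y -> pnat (tsig y) j < tn x by rewrite Nxy; apply: pnat_lt.
  apply: pnat_perm_of_fun => {i} [i Hi|i j Hi Hj E].
  - by rewrite -Nxy pnat_lt ?Hy.
  - exact: (pnat_inj Hi Hj (pnat_inj (Hy i Hi) (Hy j Hj) E)).
set z := @Triple (tn y) (tT x) (tU y) (perm_of_fun (tn y) f).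
have Vz : valid d z by apply/and4P; split => //=; apply/eqP; rewrite // nTx.
exists z; split => //.
- exists x, y, z; do !split => //; exact: rst_refl.
- move=> H1 H2; apply: pnat_perm_inj => i Hi.
  by rewrite Hf // pnat1 /f H1 H2 !pnat1.
Qed.

Lemma tmul_tequiv d x x' y y' z : tequiv d x x' -> tequiv d y y' ->
  tmul d x' y' z -> tmul d x y z.
Proof.
move=> Ex Ey [a [b [c [V [[Ea [Eb Ec]] H]]]]].
exists a, b, c; do 2 split => //.
by split; [apply: rst_trans Ex Ea|split => //; apply: rst_trans Ey Eb].
Qed.

Lemma tmul_exists d x y : 0 < d -> valid d x -> valid d y ->
  exists z, [/\ valid d z, tmul d x y z & (tsig x = 1%g -> tsig y = 1%g -> tsig z = 1%g)].
Proof.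
move=> Hd Vx Vy; have [_ wUx _ _] := validP Vx; have [wTy _ _ _] := validP Vy.
have [R [Rx Ry]] := common_refinement Hd wUx wTy.
have [x' [Vx' Ex' Ux' Hx1 _]] := refine_tU Hd Rx Vx erefl.
have [y' [Vy' Ey' Ty' Hy1]] := refine_tT Hd Ry Vy erefl.
have [z [Vz Mz Hz1]] := tmul_matched Vx' Vy' (etrans Ux' (esym Ty')).
exists z; split => //; first exact: tmul_tequiv Ex' Ey' Mz.
by move=> H1 H2; apply: Hz1; [apply: Hx1|apply: Hy1].
Qed.

(** * Faithfulness *)

Lemma triple_eq x y : tn x = tn y -> tT x = tT y -> tU x = tU y ->
  (forall j, pnat (tsig x) j = pnat (tsig y) j) -> x = y.
Proof.
case: x => n T U s; case: y => n' T' U' s' /= En ET EU Hp; subst n' T' U'.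
by congr Triple; apply: pnat_perm_inj.
Qed.

Lemma tequiv_tid_diag d x : 0 < d -> valid d x -> tT x = tU x -> tsig x = 1%g ->
  tequiv d x tid.
Proof.
move=> Hd Vx ETU H1; have [_ wU _ nU] := validP Vx.
have [x' [Vx' Ex' Ux' Hx1 Hx2]] := refine_tU Hd (refines_Leaf Hd wU) (erefl : valid d tid) erefl.
have [_ _ _ nU'] := validP Vx'.
suff -> : x = x' by apply: rst_sym.
apply: triple_eq => [||//|j].
- by rewrite -nU -nU' Ux'.
- by rewrite ETU Hx2 // Ux'.
- by rewrite H1 Hx1 // !pnat1.
Qed.

Section TrivialAction.
Variables (d : nat) (g : triple).
Hypotheses (d_gt1 : 1 < d) (g_valid : valid d g)
  (g_id : forall s, dstream d s -> tact g s = s).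

Lemma leaves_tact_id i : i < tn g ->
  nth [::] (leaves (tT g)) (pnat (tsig g) i) = nth [::] (leaves (tU g)) i.
Proof.
move=> Hi; have [_ wU _ nU] := validP g_valid.
apply: (scat_inj d_gt1) => r Hr; rewrite -(tact_scat _ Hi nU); apply: g_id.
by apply: dstream_scat Hr; apply: (leaves_dword wU); rewrite mem_nth // size_leaves nU.
Qed.

Lemma tT_tact_id : tT g = tU g.
Proof.
have [wT wU nT nU] := validP g_valid.
apply: (tree_eq_leaf_prefix (ltnW d_gt1) wT wU) => s Hs.
have [i [Hi Hp _]] := tactP g_valid Hs.
have HmU : nth [::] (leaves (tU g)) i \in leaves (tU g) by rewrite mem_nth // size_leaves nU.
have HmT : nth [::] (leaves (tU g)) i \in leaves (tT g).
  by rewrite -leaves_tact_id // mem_nth // size_leaves nT pnat_lt.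
by rewrite (leaf_prefix_mem HmU Hp) (leaf_prefix_mem HmT Hp).
Qed.

Lemma tsig_tact_id : tsig g = 1%g.
Proof.
have [_ _ nT _] := validP g_valid.
apply: pnat_perm_inj => i Hi; rewrite pnat1; apply/eqP.
rewrite -(nth_uniq [::] _ _ (leaves_uniq (tT g))) ?size_leaves ?nT ?pnat_lt //.
by rewrite leaves_tact_id // tT_tact_id.
Qed.

Lemma tequiv_tact_id : tequiv d g tid.
Proof. exact: tequiv_tid_diag (ltnW d_gt1) g_valid tT_tact_id tsig_tact_id. Qed.

End TrivialAction.

(** * Elements supported in a cylinder *)

Fixpoint spine d (v : seq nat) : tree :=
  if v is j :: v' then Node (set_nth Leaf (nseq d Leaf) j (spine d v')) else Leaf.

Lemma spineP d v : dword d v -> wf d (spine d v) /\ v \in leaves (spine d v).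
Proof.
elim: v => [|j v IH] // /andP [Hj /IH [Hw Hv]].
rewrite [spine d _]/=; split.
  rewrite wf_Node size_set_nth size_nseq maxnE subnKC // eqxx; apply/(all_nthP Leaf) => i _.
  by rewrite nth_set_nth /=; case: eqP => // _; rewrite nth_nseq if_same.
apply/mem_leaves_Node; exists j, v; split => //.
- by rewrite size_set_nth size_nseq; lia.
- by rewrite nth_set_nth /= eqxx.
Qed.

Lemma nleaves_gt0 d t : 0 < d -> wf d t -> 0 < nleaves t.
Proof.
move=> Hd Hw; have := has_sprefix_leaves (s := fun _ => 0) Hw (fun _ => Hd).
by rewrite -size_leaves; case: (leaves t).
Qed.

Definition ftriple (T U : tree) : triple := @Triple (nleaves U) T U 1%g.

(* [T, id, U] acting inside the cylinder of the i-th leaf of t. *)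
Definition local_triple (t : tree) (i : nat) (T U : tree) : triple :=
  @Triple (nleaves t - 1 + nleaves U) (subst_leaf t i T) (subst_leaf t i U) 1%g.

Section LocalTriple.
Variables (d : nat) (t : tree) (i : nat) (T U : tree).
Hypotheses (d_gt0 : 0 < d) (wf_t : wf d t) (i_lt : i < nleaves t)
  (wf_T : wf d T) (wf_U : wf d U) (nleaves_TU : nleaves T = nleaves U).

Lemma valid_local_triple : valid d (local_triple t i T U).
Proof.
by apply/and4P; split; rewrite /= ?wf_subst_leaf ?nleaves_subst_leaf ?nleaves_TU.
Qed.

Lemma tact_local_triple_in r : dstream d r ->
  tact (local_triple t i T U) (scat (nth [::] (leaves t) i) r) =
  scat (nth [::] (leaves t) i) (tact (ftriple T U) r).
Proof.
move=> Hr; have VTU : valid d (ftriple T U) by apply/and4P; split => //=; apply/eqP.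
have [j [Hj Hp ->]] := tactP VTU Hr; rewrite /= pnat1 in Hj *.
set v := nth [::] (leaves t) i; have Hsz : i < size (leaves t) by rewrite size_leaves.
have Hnth S : nleaves S = nleaves U ->
    nth [::] (leaves (subst_leaf t i S)) (i + j) = v ++ nth [::] (leaves S) j.
  move=> ES; rewrite leaves_subst_leaf // nth_splice // size_map size_leaves ES.
  by rewrite ifF ?ifT ?addKn ?(nth_map [::]) ?size_leaves ?ES //; lia.
have Hb : i + j < nleaves (subst_leaf t i U) by rewrite nleaves_subst_leaf //; lia.
rewrite /tact (@leaf_indexE _ _ (i + j)) ?Hnth ?sprefix_cat ?sprefix_scat ?sdrop_scat //.
by rewrite /= pnat1 !Hnth // size_cat sdropD sdrop_scat scat_cat.
Qed.

Lemma tact_local_triple_out s : dstream d s -> ~~ sprefix (nth [::] (leaves t) i) s ->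
  tact (local_triple t i T U) s = s.
Proof.
move=> Hs Hn; have Hl := leaf_index_lt wf_t Hs; have [_ Hp] := leaf_prefixP wf_t Hs.
set l := leaf_index t s in Hl Hp.
have Hli : l != i by apply: contra Hn => /eqP <-.
have Hsz : i < size (leaves t) by rewrite size_leaves.
have Hpos : 0 < nleaves U := nleaves_gt0 d_gt0 wf_U.
set l' := if l < i then l else l + nleaves U - 1.
have Hnth S : nleaves S = nleaves U ->
    nth [::] (leaves (subst_leaf t i S)) l' = nth [::] (leaves t) l.
  move=> ES; rewrite leaves_subst_leaf // nth_splice // size_map size_leaves ES /l'.
  case: (ltnP l i) => H1; first by rewrite H1.
  by rewrite !ifF; [congr nth| |]; lia.
have Hb : l' < nleaves (subst_leaf t i U) by rewrite nleaves_subst_leaf // /l'; case: ifP; lia.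
rewrite /tact (@leaf_indexE _ _ l') ?Hnth //.
by rewrite /= pnat1 !Hnth // scat_sdrop.
Qed.

End LocalTriple.

Definition localize d (v : seq nat) (T U : tree) : triple :=
  local_triple (spine d v) (index v (leaves (spine d v))) T U.

Section Localize.
Variables (d : nat) (v : seq nat) (T U : tree).
Hypotheses (d_gt0 : 0 < d) (v_d : dword d v)
  (wf_T : wf d T) (wf_U : wf d U) (nleaves_TU : nleaves T = nleaves U).

Lemma spine_index : [/\ wf d (spine d v), index v (leaves (spine d v)) < nleaves (spine d v)
  & nth [::] (leaves (spine d v)) (index v (leaves (spine d v))) = v].
Proof.
have [Hw Hv] := spineP v_d.
by split => //; [rewrite -size_leaves index_mem|rewrite nth_index].
Qed.

Lemma valid_localize : valid d (localize d v T U).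
Proof. by have [Hw Hi _] := spine_index; apply: valid_local_triple. Qed.

Lemma inF_localize : inF d (localize d v T U).
Proof. by exists (localize d v T U); split; [exact: valid_localize|apply: rst_refl|]. Qed.

Lemma tact_localize_in r : dstream d r ->
  tact (localize d v T U) (scat v r) = scat v (tact (ftriple T U) r).
Proof.
have [Hw Hi Ev] := spine_index.
by move=> Hr; have := tact_local_triple_in d_gt0 Hw Hi wf_T wf_U nleaves_TU Hr; rewrite Ev.
Qed.

Lemma tact_localize_out s : dstream d s -> ~~ sprefix v s -> tact (localize d v T U) s = s.
Proof.
have [Hw Hi Ev] := spine_index.
by move=> Hs Hn; apply: (tact_local_triple_out d_gt0 Hw Hi wf_T wf_U nleaves_TU Hs); rewrite Ev.
Qed.

End Localize.

Definition x0T d := graft d (caret d) 0.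
Definition x0U d := graft d (caret d) (d - 1).
Definition x0 d := ftriple (x0T d) (x0U d).

Definition spike d n : nat -> nat := fun q => if q == n then d - 1 else 0.

Section X0.
Variables (d : nat) (d_gt1 : 1 < d).

Lemma nleaves_x0 : nleaves (x0T d) = d + (d - 1) /\ nleaves (x0U d) = d + (d - 1).
Proof. by rewrite !nleaves_graft ?nleaves_caret //; lia. Qed.

Lemma x0_shape : [/\ wf d (x0T d), wf d (x0U d) & nleaves (x0T d) = nleaves (x0U d)].
Proof. by have [-> ->] := nleaves_x0; split; rewrite ?wf_graft ?wf_caret. Qed.

Lemma nth_leaves_x0 j : j < d ->
  nth [::] (leaves (x0T d)) j = [:: 0; j] /\ nth [::] (leaves (x0U d)) (d - 1 + j) = [:: d - 1; j].
Proof.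
have HC k : k < d -> k < size (leaves (caret d)) by rewrite size_leaves nleaves_caret.
move=> Hj; rewrite /x0U /x0T !leaves_graft ?nleaves_caret; try lia.
rewrite !nth_graft_addrs ?HC; try lia.
rewrite /= add0n ifT // subn0 ifF ?ifT; try lia.
by rewrite addKn !nth_leaves_caret //; lia.
Qed.

Lemma tact_x0_0 r : tact (x0 d) (scat [:: 0] r) = scat [:: 0; 0] r.
Proof.
have HU : nth [::] (leaves (x0U d)) 0 = [:: 0].
  rewrite /x0U leaves_graft ?nleaves_caret; last lia.
  by rewrite nth_graft_addrs ?size_leaves ?nleaves_caret ?ifT ?nth_leaves_caret //; lia.
have [HT _] := nth_leaves_x0 (ltnW d_gt1).
have H0 : 0 < tn (x0 d) by rewrite -[tn _]/(nleaves (x0U d)) (proj2 nleaves_x0); lia.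
by rewrite -{1}HU tact_scat //= pnat1 HT.
Qed.

Lemma tact_x0_last r : tact (x0 d) (scat [:: d - 1; 0] r) = scat [:: 0; d - 1] r.
Proof.
have [_ HU] := nth_leaves_x0 (ltnW d_gt1); rewrite addn0 in HU.
have Hd1 : d - 1 < d by lia.
have [HT _] := nth_leaves_x0 Hd1.
have H0 : d - 1 < tn (x0 d) by rewrite -[tn _]/(nleaves (x0U d)) (proj2 nleaves_x0); lia.
by rewrite -{1}HU tact_scat //= pnat1 HT.
Qed.

Lemma dstream_spike n : dstream d (spike d n).
Proof. by move=> q; rewrite /spike; case: ifP; lia. Qed.

Lemma tact_x0_spike n : tact (x0 d) (spike d n) = spike d n.+1.
Proof.
have spikeS m : spike d m.+1 = scat [:: 0] (spike d m).
  by apply: functional_extensionality => -[|q] //=; rewrite /scat /= subn1.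
case: n => [|n]; last by rewrite spikeS tact_x0_0 !spikeS -(scat_cat [:: 0] [:: 0]).
have -> : spike d 0 = scat [:: d - 1; 0] (fun _ => 0).
  by apply: functional_extensionality => -[|[|q]].
rewrite tact_x0_last; apply: functional_extensionality => -[|[|q]] //.
Qed.

End X0.

Lemma tcomm_exists d a b : 0 < d -> valid d a -> valid d b ->
  exists c, [/\ valid d c, tcomm d a b c & (tsig a = 1%g -> tsig b = 1%g -> tsig c = 1%g)].
Proof.
move=> Hd Va Vb.
have [p [Vp Mp Sp]] := tmul_exists Hd Va Vb.
have [q [Vq Mq Sq]] := tmul_exists Hd (valid_tinv Va) (valid_tinv Vb).
have [c [Vc Mc Sc]] := tmul_exists Hd Vp Vq.
exists c; split => //; first by exists p, q.
by move=> Ha Hb; apply: Sc; [apply: Sp|apply: Sq; rewrite /= ?Ha ?Hb invg1].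
Qed.

Lemma tact_tcomm d a b c s : 0 < d -> valid d a -> valid d b -> tcomm d a b c ->
  dstream d s -> tact c s = tact a (tact b (tact (tinv a) (tact (tinv b) s))).
Proof.
move=> Hd Va Vb [p [q [Mp Mq Mc]]] Hs.
rewrite (tact_tmul Hd Mc Hs) (tact_tmul Hd Mq Hs) (tact_tmul Hd Mp) //.
exact/(dstream_tact (valid_tinv Va))/(dstream_tact (valid_tinv Vb)).
Qed.

Definition spike_shift d (u W : seq nat) (n : nat) (h : triple) :=
  [/\ valid d h, inFF d h, tsig h = 1%g,
      forall k, tact h (scat W (spike d k)) = scat W (spike d (k + n))
    & forall s, dstream d s -> ~~ sprefix u s -> tact h s = s].

Section Commutator.
Variables (d : nat) (u : seq nat).
Hypotheses (d_gt1 : 1 < d) (u_d : dword d u).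

Let d_gt0 : 0 < d. Proof. exact: ltnW. Qed.

(* With [a] = x0 placed at [W] and [b] = x0 placed at [u], [b^-1] moves a spike
   point [W ++ spike k] out of the cylinder of [W], where [a^-1] is trivial,
   and [b] moves it back: so [[a, b]] acts there as [a], i.e. as x0. *)
Lemma commutator_spike_shift : exists c, spike_shift d u (u ++ [:: 0; d - 1]) 1 c.
Proof.
have [wT wU nTU] := x0_shape d_gt1.
set W := u ++ [:: 0; d - 1].
have W_d : dword d W by rewrite all_cat u_d /= andbT; apply/andP; split; lia.
set a := localize d W (x0T d) (x0U d); set b := localize d u (x0T d) (x0U d).
have Va : valid d a by apply: valid_localize.
have Vb : valid d b by apply: valid_localize.
have [c [Vc Mc Sc]] := tcomm_exists d_gt0 Va Vb.
have Aout s : dstream d s -> ~~ sprefix W s -> tact a s = s by apply: tact_localize_out.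
have Bout s : dstream d s -> ~~ sprefix u s -> tact b s = s by apply: tact_localize_out.
exists c; split => //.
- by apply: (FF_comm _ _ Va Vb Vc Mc); apply: inF_localize.
- exact: Sc.
- move=> k; have Gk := dstream_spike d_gt1 k.
  set q := scat u (scat [:: d - 1; 0] (spike d k)).
  have Gq : dstream d q.
    by apply/dstream_scat/dstream_scat => //=; rewrite andbT; apply/andP; split; lia.
  have Bq : tact b q = scat W (spike d k).
    by rewrite tact_localize_in ?tact_x0_last ?scat_cat //; apply: dstream_scat => //=; lia.
  have Aq : tact a q = q.
    apply: Aout => //; rewrite sprefix_cat sdrop_scat negb_and; apply/orP; right.
    by apply/negP => /sprefixP /(_ 0 isT); rewrite /scat /=; lia.
  rewrite (tact_tcomm d_gt0 Va Vb Mc); last exact: dstream_scat W_d Gk.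
  rewrite (tactV Vb Gq Bq) (tact_fixV Va Gq Aq) Bq tact_localize_in //.
  by rewrite tact_x0_spike // addn1.
- move=> s Hs Hn; have HnW : ~~ sprefix W s by rewrite sprefix_cat negb_and Hn.
  rewrite (tact_tcomm d_gt0 Va Vb Mc Hs).
  by rewrite (tact_fixV Vb Hs (Bout s Hs Hn)) (tact_fixV Va Hs (Aout s Hs HnW)) Bout ?Aout.
Qed.

End Commutator.

Lemma spike_shift_power d u W c : 1 < d -> dword d W -> spike_shift d u W 1 c ->
  forall n, exists h, spike_shift d u W n h.
Proof.
move=> Hd HW [Vc Fc Sc Ac Xc]; have Hd0 : 0 < d by lia.
elim => [|n [h [Vh Fh Sh Ah Xh]]].
  exists tid; split => //; first exact: FF_id.
  - by move=> k; rewrite tact_tid addn0.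
  - by move=> s *; rewrite tact_tid.
have [z [Vz Mz Sz]] := tmul_exists Hd0 Vh Vc.
exists z; split => //; first exact: FF_mul Fh Fc Vz Mz.
- exact: Sz.
- move=> k; rewrite (tact_tmul Hd0 Mz); last exact/dstream_scat/dstream_spike.
  by rewrite Ac Ah addn1 addnS.
- by move=> s Hs Hn; rewrite (tact_tmul Hd0 Mz Hs) Xc // Xh.
Qed.

(** * Infinitely many conjugates *)

Lemma nth_cat_mkseq a t m p : p < size a + m -> nth 0 (a ++ mkseq t m) p = scat a t p.
Proof. by move=> Hp; rewrite nth_cat /scat; case: ltnP => // H; rewrite nth_mkseq //; lia. Qed.

Lemma scat_cat_mkseq a t m r p : p < size a + m -> scat (a ++ mkseq t m) r p = scat a t p.
Proof. by move=> Hp; rewrite {1}/scat size_cat size_mkseq Hp nth_cat_mkseq. Qed.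

Lemma tact_moves_cylinder d g : 1 < d -> valid d g -> ~ tequiv d g tid ->
  exists w u, [/\ dword d w, dword d u, forall r, tact g (scat w r) = scat u r
    & forall r, ~~ sprefix u (scat w r)].
Proof.
move=> Hd Vg Hng; have [wT wU nT nU] := validP Vg.
have [s [Hs Hgs]] : exists s, dstream d s /\ tact g s <> s.
  apply: NNPP => H; apply/Hng/tequiv_tact_id => // s Hs.
  by apply: NNPP => H2; apply: H; exists s.
have [p Hp] : exists p, s p <> tact g s p.
  apply: NNPP => H; apply/Hgs/functional_extensionality => q.
  by apply: NNPP => H2; apply: H; exists q => E; apply: H2.
have [i [Hi Ha Eg]] := tactP Vg Hs; rewrite Eg -{1}(scat_sdrop Ha) in Hp.
set a := nth [::] (leaves (tU g)) i in Ha Hp *.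
set b := nth [::] (leaves (tT g)) (pnat (tsig g) i) in Hp *.
set t := sdrop (size a) s in Hp *.
have Da : dword d a by apply: (leaves_dword wU); rewrite mem_nth // size_leaves nU.
have Db : dword d b by apply: (leaves_dword wT); rewrite mem_nth // size_leaves nT pnat_lt.
(* extend both leaves up to a position [p] where [s] and [g s] differ *)
have Dt : dword d (mkseq t p.+1).
  by apply/(all_nthP 0) => j; rewrite size_mkseq => Hj; rewrite nth_mkseq //; apply: dstream_sdrop.
exists (a ++ mkseq t p.+1), (b ++ mkseq t p.+1); split; rewrite ?all_cat ?Da ?Db //.
- by move=> r; rewrite !scat_cat tact_scat.
- move=> r; apply/negP => /sprefixP /(_ p); rewrite size_cat size_mkseq.
  by rewrite nth_cat_mkseq ?scat_cat_mkseq; try lia; move=> E; apply/Hp/esym/E; lia.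
Qed.

Lemma conjugate_spikes d g : 1 < d -> valid d g -> ~ tequiv d g tid ->
  exists W y, dstream d y /\ forall n, exists h c,
    [/\ inFF d h, tsig h = 1%g, valid d h /\ valid d c, tconj d h g c
      & tact c y = scat W (spike d n)].
Proof.
move=> Hd Vg Hng; have Hd0 : 0 < d by lia.
have [w [u [Dw Du Hg Hwu]]] := tact_moves_cylinder Hd Vg Hng.
have [c Hc] := commutator_spike_shift Hd Du.
have D0 : dword d [:: 0; d - 1] by rewrite /= andbT; apply/andP; split; lia.
have DW : dword d (u ++ [:: 0; d - 1]) by rewrite all_cat Du.
set r0 := scat [:: 0; d - 1] (spike d 0).
have Gy : dstream d (scat w r0) by apply/dstream_scat/dstream_scat/dstream_spike.
exists (u ++ [:: 0; d - 1]), (scat w r0); split => // n.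
have [h [Vh Fh Sh Ah Xh]] := spike_shift_power Hd DW Hc n.
have [p [Vp Mp _]] := tmul_exists Hd0 Vh Vg.
have [cn [Vcn Mcn _]] := tmul_exists Hd0 Vp (valid_tinv Vh).
exists h, cn; split => //; first by exists p.
rewrite (tact_tmul Hd0 Mcn Gy) (tact_fixV Vh Gy (Xh _ Gy (Hwu r0))).
by rewrite (tact_tmul Hd0 Mp Gy) Hg /r0 -scat_cat Ah.
Qed.

Lemma avoid_nat (l : seq nat) : exists2 n, n <= size l & n \notin l.
Proof.
have [/hasP [n Hn Hnl]|/hasPn H] := boolP (has (fun n => n \notin l) (iota 0 (size l).+1)).
  by exists n => //; move: Hn; rewrite mem_iota.
have Hsub : {subset iota 0 (size l).+1 <= l} by move=> x /H; rewrite negbK.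
by have := uniq_leq_size (iota_uniq 0 (size l).+1) Hsub; rewrite size_iota ltnn.
Qed.

Definition spike_index (W : seq nat) (M : nat) (z : nat -> nat) :=
  find (fun q => z (size W + q) != 0) (iota 0 M).

Lemma spike_indexE d W M n : 1 < d -> n < M -> spike_index W M (scat W (spike d n)) = n.
Proof.
move=> Hd Hn; rewrite /spike_index (@eq_in_find _ _ (pred1 n)); last first.
  move=> q _; rewrite /= /scat ltnNge leq_addr addKn /spike.
  by case: (q == n); [apply/eqP; lia|].
have := index_uniq 0 (_ : n < size (iota 0 M)) (iota_uniq 0 M).
by rewrite size_iota nth_iota //; apply.
Qed.

(* Equivalent triples act alike, so it suffices that the spike of [tact c y]
   sits at a position not taken by the [tact x y], x in [sl]. *)
Lemma commutator_conjugates_distinct d g : 1 < d -> valid d g -> ~ tequiv d g tid ->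
  forall sl : seq triple, exists h c,
    [/\ inFF d h, tsig h = 1%g, valid d h /\ valid d c, tconj d h g c
      & forall i, i < size sl -> ~ tequiv d c (nth tid sl i)].
Proof.
move=> Hd Vg Hng sl; have [W [y [Gy Hconj]]] := conjugate_spikes Hd Vg Hng.
set K := fun x => spike_index W (size sl).+1 (tact x y).
have [n Hn Hnl] := avoid_nat (map K sl); rewrite size_map in Hn.
have [h [c [Fh Sh Vhc Hcj Hy]]] := Hconj n.
exists h, c; split => // i Hi Heq; move/negP: Hnl; apply.
have <- : K (nth tid sl i) = n by rewrite /K -(tact_tequiv _ Heq Gy) ?Hy ?spike_indexE //; lia.
by rewrite -(nth_map tid 0 K Hi) mem_nth ?size_map.
Qed.

Theorem mainTheorem6 (d : nat) (hd : 2 <= d) (W : triple -> Prop) :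
  is_subgroupV d W ->
  (forall x, inFF d x -> W x) ->
  (forall g, W g -> ~ tequiv d g tid -> inf_conj d (inFF d) g) /\
  ((forall x, valid d x -> inF d x -> W x) ->
   forall g, W g -> ~ tequiv d g tid -> inf_conj d (inF d) g).
Proof.
move=> [W_valid _ _ _ _] _; split => [|_] g Wg Hng sl.
all: have [h [c [Fh Sh [Vh Vc] Hcj Hn]]] :=
  commutator_conjugates_distinct hd (W_valid g Wg) Hng sl.
- by exists h, c.
- by exists h, c; split => //; exists h; split => //; apply: rst_refl.
Qed.
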